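(* Let $a>0$, $b,c\ge 0$, and consider the system $$\dot x=x(1-y+cx-axz),\qquad \dot y=y(-1+x),\qquad \dot z=z(-b+ax^2).$$ Let $f$ be an irreducible Darboux polynomial of degree greater than one with non-zero cofactor $$K=\alpha_0+\alpha_1x+\alpha_2y+\alpha_3z+\alpha_4x^2+\alpha_5xy+\alpha_6xz+\alpha_7y^2+\alpha_8yz+\alpha_9z^2,\quad \alpha_i\in\mathbb{C}.$$ Then $\alpha_5=\alpha_7=\alpha_8=\alpha_9=0$, and $\alpha_4=N_4a$, $\alpha_6=-N_6a$ for some $N_4,N_6\in\mathbb{N}\cup\{0\}$.
   Context: A Darboux polynomial is $f\in\mathbb{C}[x,y,z]$ with $x(1-y+cx-axz)f_x+y(-1+x)f_y+z(-b+ax^2)f_z=Kf$ for a polynomial cofactor $K$ of degree at most two. *)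

From HB Require Import structures.
From mathcomp Require Import all_boot all_order all_algebra.
From mathcomp Require Import mpoly.
Set Implicit Arguments. Unset Strict Implicit. Unset Printing Implicit Defensive.
Import Order.TTheory GRing.Theory Num.Theory.
Local Open Scope ring_scope.

Definition i0 : 'I_3 := @Ordinal 3 0 isT.
Definition i1 : 'I_3 := @Ordinal 3 1 isT.
Definition i2 : 'I_3 := @Ordinal 3 2 isT.

Section Defs.
Variable C : numClosedFieldType.

Definition vx : {mpoly C[3]} := 'X_i0.
Definition vy : {mpoly C[3]} := 'X_i1.
Definition vz : {mpoly C[3]} := 'X_i2.

Definition Xf (a b c : C) (f : {mpoly C[3]}) : {mpoly C[3]} :=
  vx * (1 - vy + c *: vx - a *: (vx * vz)) * f^`M(i0)
  + vy * (-1 + vx) * f^`M(i1)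
  + vz * (- b%:MP + a *: (vx ^+ 2)) * f^`M(i2).

(* f is a Darboux polynomial with cofactor K (K of total degree <= 2). *)
Definition darboux (a b c : C) (f K : {mpoly C[3]}) : Prop :=
  Xf a b c f = K * f /\ (msize K <= 3)%N.

Definition irreducible_mpoly (f : {mpoly C[3]}) : Prop :=
  f != 0 /\ f \isn't a GRing.unit /\
  forall g h : {mpoly C[3]}, f = g * h -> g \is a GRing.unit \/ h \is a GRing.unit.

Definition tdeg (f : {mpoly C[3]}) : nat := (msize f).-1.

Definition cofK (al0 al1 al2 al3 al4 al5 al6 al7 al8 al9 : C) : {mpoly C[3]} :=
  al0%:MP + al1 *: vx + al2 *: vy + al3 *: vz + al4 *: (vx ^+ 2)
  + al5 *: (vx * vy) + al6 *: (vx * vz) + al7 *: (vy ^+ 2)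
  + al8 *: (vy * vz) + al9 *: (vz ^+ 2).
End Defs.

(* Comparing the coefficients of x^i y^j z^k in X f = K f gives a linear
   recurrence (darboux_coef_rec) among the coefficients of f at ten shifts of
   (i, j, k), one for each monomial of K.  Fix a weight w, take a monomial of f
   of maximal weight, and evaluate the recurrence at that monomial shifted by
   the unique shift delta of least weight among those that still carry a
   possibly non-zero coefficient: every term but one then vanishes, so the
   coefficient attached to delta is zero.  The shifts of x^2, y^2, z^2 are
   vertices of the Newton polytope of K; those of yz and xz become vertices
   once the z^2 coefficient is known to vanish, and that of xy once the y^2
   coefficient is.  For x^2 and xz the surviving coefficient is a k - al4,
   resp. -(a i + al6), with k and i exponents of f, which gives the natural
   numbers. *)

From mathcomp Require Import all_boot all_order all_algebra.
From mathcomp Require Import mpoly.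
From mathcomp Require Import zify ring.
Import Order.TTheory GRing.Theory Num.Theory.
Set Implicit Arguments.
Unset Strict Implicit.
Unset Printing Implicit Defensive.
Local Open Scope ring_scope.

Lemma seq_argmax (T : eqType) (d : Order.disp_t) (U : orderType d) (F : T -> U)
    (s : seq T) :
  s != [::] -> exists2 x, x \in s & forall y, y \in s -> (F y <= F x)%O.
Proof.
elim: s => // x [|y s] IH _.
  by exists x => [|t]; rewrite ?mem_seq1 // => /eqP ->.
have [z zs zmax] := IH isT.
have [le_zx | lt_xz] := leP (F z) (F x).
- exists x => [|t]; first exact: mem_head.
  by rewrite in_cons => /predU1P [-> // | /zmax /le_trans]; apply.
- exists z => [|t]; first by rewrite in_cons zs orbT.
  by rewrite in_cons => /predU1P [-> | /zmax //]; apply: ltW.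
Qed.

Section IntegerExponents.
Variables (n : nat) (R : nzRingType).
Implicit Types (p q : {mpoly R[n]}) (v w : 'I_n -> int).

(* Extending the coefficients by zero to Z^n turns multiplication by a
   variable into a plain index shift (mcoeffzMX). *)
Definition mcoeffz p v : R :=
  if [forall i, 0 <= v i] then p@_[multinom `|v i|%N | i < n] else 0.

Lemma eq_mcoeffz p v w : v =1 w -> mcoeffz p v = mcoeffz p w.
Proof.
move=> vw; rewrite /mcoeffz (eq_forallb (fun i => congr1 _ (vw i))).
by congr (if _ then p@__ else _); apply/mnmP => i; rewrite !mnmE vw.
Qed.

Lemma mcoeffz_nat p (m : 'X_{1..n}) : mcoeffz p (fun i => (m i)%:Z) = p@_m.
Proof.
rewrite /mcoeffz; have -> : [forall i, 0 <= (m i)%:Z] by apply/forallP.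
by congr p@__; apply/mnmP => i; rewrite mnmE.
Qed.

Lemma mcoeffz_neq0 p v :
  mcoeffz p v != 0 -> exists2 m, m \in msupp p & v =1 (fun i => (m i)%:Z).
Proof.
rewrite /mcoeffz; case: forallP => [v_ge0 nz | _]; last by rewrite eqxx.
exists [multinom `|v i|%N | i < n]; first by rewrite mcoeff_msupp.
by move=> i; rewrite mnmE; have := v_ge0 i; lia.
Qed.

Lemma mcoeffz0 v : mcoeffz 0 v = 0.
Proof. by rewrite /mcoeffz mcoeff0; case: ifP. Qed.

Lemma mcoeffzD p q v : mcoeffz (p + q) v = mcoeffz p v + mcoeffz q v.
Proof. by rewrite /mcoeffz mcoeffD; case: ifP; rewrite ?addr0. Qed.

Lemma mcoeffzN p v : mcoeffz (- p) v = - mcoeffz p v.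
Proof. by rewrite /mcoeffz mcoeffN; case: ifP; rewrite ?oppr0. Qed.

Lemma mcoeffzZ (c : R) p v : mcoeffz (c *: p) v = c * mcoeffz p v.
Proof. by rewrite /mcoeffz mcoeffZ; case: ifP; rewrite ?mulr0. Qed.

Lemma mcoeffzMX p t v :
  mcoeffz (p * 'X_t) v = mcoeffz p (fun i => v i - (t == i)%:Z).
Proof.
rewrite /mcoeffz.
case: (boolP [forall i, 0 <= v i]) => [/forallP v_ge0 | v_neg]; last first.
  case: ifP => // /forallP v'_ge0; case/forallPn: v_neg => i.
  by have := v'_ge0 i; lia.
case: (boolP [forall i, 0 <= v i - (t == i)%:Z]) => [/forallP v'_ge0 | v'_neg].
  have -> : [multinom `|v i|%N | i < n]
          = (U_(t) + [multinom `|v i - (t == i)%:Z|%N | i < n])%MM.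
    apply/mnmP => i; rewrite mnmDE !mnmE ?mnm1E.
    by have := v'_ge0 i; case: (t == i) => /=; lia.
  by rewrite mcoeffMX.
apply/eqP; rewrite mcoeff_eq0 (perm_mem (msuppMX p U_(t))).
apply/mapP => -[m _ mE]; case/forallPn: v'_neg => i.
have := congr1 (fun m : 'X_{1..n} => m i) mE; rewrite mnmDE !mnmE ?mnm1E.
by have := v_ge0 i; case: (t == i) => /=; lia.
Qed.

Lemma mcoeffzX_mderiv p t v :
  mcoeffz ('X_t * p^`M(t)) v = (v t)%:~R * mcoeffz p v.
Proof.
rewrite -commr_mpolyX mcoeffzMX /mcoeffz.
case: (boolP [forall i, 0 <= v i]) => [/forallP v_ge0 | v_neg]; last first.
  rewrite mulr0; case: ifP => // /forallP v'_ge0; case/forallPn: v_neg => i.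
  by have := v'_ge0 i; lia.
case: (boolP [forall i, 0 <= v i - (t == i)%:Z]) => [/forallP v'_ge0 | v'_neg].
  rewrite mcoeff_mderiv mnmE -mulr_natl.
  have -> : ([multinom `|v i - (t == i)%:Z|%N | i < n] + U_(t))%MM
          = [multinom `|v i|%N | i < n].
    apply/mnmP => i; rewrite mnmDE !mnmE ?mnm1E.
    by have := v'_ge0 i; case: (t == i) => /=; lia.
  have := v'_ge0 t; rewrite eqxx => vt_pos; congr (_ * _).
  have -> : (`|v t - 1|.+1 = `|v t|)%N by lia.
  by rewrite -[in RHS](gez0_abs (v_ge0 t)).
have -> : v t = 0.
  by case/forallPn: v'_neg => i; have := v_ge0 i; case: eqP => [<-|] /=; lia.
by rewrite mul0r.
Qed.

End IntegerExponents.

Section ThreeVariables.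
Variable R : comNzRingType.
Implicit Types (p q : {mpoly R[3]}) (i j k : int).

Definition mcoeff3 p i j k : R := mcoeffz p (fun s => nth 0 [:: i; j; k] s).

Lemma mcoeff3_nat p (m : 'X_{1..3}) : mcoeff3 p (m i0) (m i1) (m i2) = p@_m.
Proof.
rewrite -mcoeffz_nat; apply: eq_mcoeffz => -[[|[|[|s]]] lt_s3] //=;
  by congr (m _ : int); apply: val_inj.
Qed.

Lemma mcoeff3_neq0 p i j k : mcoeff3 p i j k != 0 ->
  exists2 m : 'X_{1..3}, m \in msupp p & [/\ i = m i0, j = m i1 & k = m i2].
Proof.
case/mcoeffz_neq0 => m supp_m vE; exists m => //.
by split; [exact: vE i0 | exact: vE i1 | exact: vE i2].
Qed.

Lemma mcoeff3_0 i j k : mcoeff3 0 i j k = 0.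
Proof. exact: mcoeffz0. Qed.

Lemma mcoeff3D p q i j k :
  mcoeff3 (p + q) i j k = mcoeff3 p i j k + mcoeff3 q i j k.
Proof. exact: mcoeffzD. Qed.

Lemma mcoeff3N p i j k : mcoeff3 (- p) i j k = - mcoeff3 p i j k.
Proof. exact: mcoeffzN. Qed.

Lemma mcoeff3Z (c : R) p i j k : mcoeff3 (c *: p) i j k = c * mcoeff3 p i j k.
Proof. exact: mcoeffzZ. Qed.

Lemma mcoeff3_mulx p i j k : mcoeff3 (p * 'X_i0) i j k = mcoeff3 p (i - 1) j k.
Proof.
rewrite /mcoeff3 mcoeffzMX.
by apply: eq_mcoeffz => -[[|[|[|s]]] ?] //=; rewrite subr0.
Qed.

Lemma mcoeff3_muly p i j k : mcoeff3 (p * 'X_i1) i j k = mcoeff3 p i (j - 1) k.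
Proof.
rewrite /mcoeff3 mcoeffzMX.
by apply: eq_mcoeffz => -[[|[|[|s]]] ?] //=; rewrite subr0.
Qed.

Lemma mcoeff3_mulz p i j k : mcoeff3 (p * 'X_i2) i j k = mcoeff3 p i j (k - 1).
Proof.
rewrite /mcoeff3 mcoeffzMX.
by apply: eq_mcoeffz => -[[|[|[|s]]] ?] //=; rewrite subr0.
Qed.

Lemma mcoeff3_xdx p i j k :
  mcoeff3 ('X_i0 * p^`M(i0)) i j k = i%:~R * mcoeff3 p i j k.
Proof. exact: mcoeffzX_mderiv. Qed.

Lemma mcoeff3_ydy p i j k :
  mcoeff3 ('X_i1 * p^`M(i1)) i j k = j%:~R * mcoeff3 p i j k.
Proof. exact: mcoeffzX_mderiv. Qed.

Lemma mcoeff3_zdz p i j k :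
  mcoeff3 ('X_i2 * p^`M(i2)) i j k = k%:~R * mcoeff3 p i j k.
Proof. exact: mcoeffzX_mderiv. Qed.

Lemma mcoeff3_max_weight p (w : int -> int -> int -> int) : p != 0 ->
  exists i j k : nat, mcoeff3 p i j k != 0 /\
    forall x y z, w i j k < w x y z -> mcoeff3 p x y z = 0.
Proof.
rewrite -msupp_eq0 => supp_nil.
have [m supp_m m_max] :=
  seq_argmax (fun m : 'X_{1..3} => w (m i0) (m i1) (m i2)) supp_nil.
exists (m i0), (m i1), (m i2).
split; first by rewrite mcoeff3_nat -mcoeff_msupp.
move=> x y z lt_w; apply/eqP; apply: contraTT lt_w.
case/mcoeff3_neq0 => m' supp_m' [-> -> ->].
by rewrite -leNgt; apply: m_max.
Qed.

End ThreeVariables.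

(* Rewrites each [mcoeff3 p x y z] of the goal to 0 by [top] when lia shows
   that (x, y, z) outweighs (i, j, k), or to [mcoeff3 p i j k] when lia shows
   the indices are equal. *)
Ltac vanish top i j k :=
  repeat match goal with
  | |- context [mcoeff3 ?p ?x ?y ?z] =>
      tryif (constr_eq x i; constr_eq y j; constr_eq z k) then fail else
      first [ rewrite (top x y z); last by cbv beta; lia
            | rewrite (_ : mcoeff3 p x y z = mcoeff3 p i j k);
                last by congr mcoeff3; lia ]
  end.

Section DarbouxCoefficients.
Variables (C : numClosedFieldType) (a b c : C) (f : {mpoly C[3]}).
Variables (al0 al1 al2 al3 al4 al5 al6 al7 al8 al9 : C).
Hypothesis darb : Xf a b c f = cofK al0 al1 al2 al3 al4 al5 al6 al7 al8 al9 * f.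

Local Notation g := (mcoeff3 f).

Lemma darboux_coef_rec i j k :
  (i%:~R - j%:~R - b * k%:~R - al0) * g i j k
  + (c * (i - 1)%:~R + j%:~R - al1) * g (i - 1) j k
  - (i%:~R + al2) * g i (j - 1) k
  - al3 * g i j (k - 1)
  + (a * k%:~R - al4) * g (i - 2) j k
  - al5 * g (i - 1) (j - 1) k
  - (a * (i - 1)%:~R + al6) * g (i - 1) j (k - 1)
  - al7 * g i (j - 2) k
  - al8 * g i (j - 1) (k - 1)
  - al9 * g i j (k - 2) = 0.
Proof.
pose dx := 'X_i0 * f^`M(i0); pose dy := 'X_i1 * f^`M(i1).
pose dz := 'X_i2 * f^`M(i2).
have expand : Xf a b c f - cofK al0 al1 al2 al3 al4 al5 al6 al7 al8 al9 * f =
  dx - dx * 'X_i1 + c *: (dx * 'X_i0) - a *: (dx * 'X_i0 * 'X_i2)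
  - dy + dy * 'X_i0 - b *: dz + a *: (dz * 'X_i0 * 'X_i0)
  - (al0 *: f + al1 *: (f * 'X_i0) + al2 *: (f * 'X_i1) + al3 *: (f * 'X_i2)
     + al4 *: (f * 'X_i0 * 'X_i0) + al5 *: (f * 'X_i0 * 'X_i1)
     + al6 *: (f * 'X_i0 * 'X_i2) + al7 *: (f * 'X_i1 * 'X_i1)
     + al8 *: (f * 'X_i1 * 'X_i2) + al9 *: (f * 'X_i2 * 'X_i2)).
  by rewrite /Xf /cofK /vx /vy /vz /dx /dy /dz -!mul_mpolyC; ring.
have sub2 (x : int) : x - 1 - 1 = x - 2 by lia.
rewrite -[RHS](mcoeff3_0 _ i j k) -(subrr (Xf a b c f)) {2}darb expand.
rewrite !(mcoeff3D, mcoeff3N, mcoeff3Z).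
rewrite !(mcoeff3_mulx, mcoeff3_muly, mcoeff3_mulz).
rewrite !(mcoeff3_xdx, mcoeff3_ydy, mcoeff3_zdz) !sub2.
(* Abstracting the coefficients stops ring from comparing them by conversion,
   which is very slow. *)
by move: (mcoeff3 f) => coef; ring.
Qed.

Hypothesis f_neq0 : f != 0.

Lemma cofK_z2_eq0 : al9 = 0.
Proof.
have [i [j [k [nz top]]]] := mcoeff3_max_weight (fun _ _ z => z) f_neq0.
have rel : - al9 * g i j k = 0.
  by rewrite -[RHS](darboux_coef_rec i j (k + 2)); vanish top i j k; ring.
by move/eqP: rel; rewrite mulf_eq0 (negbTE nz) oppr_eq0 orbF => /eqP.
Qed.

Lemma cofK_y2_eq0 : al7 = 0.
Proof.
have [i [j [k [nz top]]]] := mcoeff3_max_weight (fun _ y _ => y) f_neq0.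
have rel : - al7 * g i j k = 0.
  by rewrite -[RHS](darboux_coef_rec i (j + 2) k); vanish top i j k; ring.
by move/eqP: rel; rewrite mulf_eq0 (negbTE nz) oppr_eq0 orbF => /eqP.
Qed.

Lemma cofK_yz_eq0 : al8 = 0.
Proof.
have [i [j [k [nz top]]]] := mcoeff3_max_weight (fun _ y z => y + 2 * z) f_neq0.
have rel : - al8 * g i j k = 0.
  rewrite -[RHS](darboux_coef_rec i (j + 1) (k + 1)); vanish top i j k.
  by rewrite cofK_z2_eq0; ring.
by move/eqP: rel; rewrite mulf_eq0 (negbTE nz) oppr_eq0 orbF => /eqP.
Qed.

Lemma cofK_xy_eq0 : al5 = 0.
Proof.
have [i [j [k [nz top]]]] :=
  mcoeff3_max_weight (fun x y z => x + 2 * y - z) f_neq0.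
have rel : - al5 * g i j k = 0.
  rewrite -[RHS](darboux_coef_rec (i + 1) (j + 1) k); vanish top i j k.
  by rewrite cofK_y2_eq0; ring.
by move/eqP: rel; rewrite mulf_eq0 (negbTE nz) oppr_eq0 orbF => /eqP.
Qed.

Lemma cofK_xz_eq_natN : exists N : nat, al6 = - (N%:R * a).
Proof.
have [i [j [k [nz top]]]] := mcoeff3_max_weight (fun x _ z => x + 2 * z) f_neq0.
have rel : - (a * i%:R + al6) * g i j k = 0.
  rewrite -[RHS](darboux_coef_rec (i + 1) j (k + 1)); vanish top i j k.
  by rewrite cofK_z2_eq0; ring.
move/eqP: rel; rewrite mulf_eq0 (negbTE nz) orbF oppr_eq0 addrC addr_eq0.
move=> /eqP ->.
by exists i; rewrite mulrC.
Qed.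

Lemma cofK_x2_eq_nat : exists N : nat, al4 = N%:R * a.
Proof.
have [i [j [k [nz top]]]] := mcoeff3_max_weight (fun x _ _ => x) f_neq0.
have rel : (a * k%:R - al4) * g i j k = 0.
  by rewrite -[RHS](darboux_coef_rec (i + 2) j k); vanish top i j k; ring.
move/eqP: rel; rewrite mulf_eq0 (negbTE nz) orbF subr_eq0 => /eqP <-.
by exists k; rewrite mulrC.
Qed.

End DarbouxCoefficients.

Theorem lemma4p2 (C : numClosedFieldType) (a b c : C)
  (ha : 0 < a) (hb : 0 <= b) (hc : 0 <= c)
  (f : {mpoly C[3]}) (al0 al1 al2 al3 al4 al5 al6 al7 al8 al9 : C) :
  irreducible_mpoly f ->
  (1 < tdeg f)%N ->
  cofK al0 al1 al2 al3 al4 al5 al6 al7 al8 al9 != 0 ->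
  darboux a b c f (cofK al0 al1 al2 al3 al4 al5 al6 al7 al8 al9) ->
  [/\ al5 = 0, al7 = 0, al8 = 0, al9 = 0 &
      exists N4 N6 : nat, al4 = N4%:R * a /\ al6 = - (N6%:R * a)].
Proof.
move=> [f_neq0 _] _ _ [darb _].
split; [exact: cofK_xy_eq0 darb f_neq0 | exact: cofK_y2_eq0 darb f_neq0
       | exact: cofK_yz_eq0 darb f_neq0 | exact: cofK_z2_eq0 darb f_neq0 | ].
have [N4 ->] := cofK_x2_eq_nat darb f_neq0.
have [N6 ->] := cofK_xz_eq_natN darb f_neq0.
by exists N4, N6.
Qed.
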